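(* Let $n\ge 5$. Then for every $1\le r\le n$, the set $N(W_r)$ (of size $n-1$) is not a strong resolving set of $L(n)$.
   Context: For $n\ge 5$, $H(n)$ is the graph with vertex set $V_1\cup V_2$, where $V_1=\{v_1,\dots,v_n\}$ and $V_2=\{v_iv_j: 1\le i<j\le n\}$, and $v_r$ is adjacent to $v_iv_j$ iff $r\in\{i,j\}$ (no other edges). $L(n)$ is the line graph of $H(n)$: its vertices are the edges $\{v_r,v_iv_j\}$ of $H(n)$ (with $r\in\{i,j\}$), two being adjacent iff they share an endpoint. For $1\le r\le n$, $W_r$ is the set of vertices of $L(n)$ of the form $\{v_r,v_iv_j\}$; it is a maximal clique of size $n-1$. $N(W_r)$ denotes the set of vertices of $L(n)$ not in $W_r$ adjacent to some vertex of $W_r$, i.e. $N(W_r)=\{\{v_k,v_iv_j\}: k\neq r,\ \{i,j\}=\{r,k\}\}$. A set $Q\subseteq V(G)$ is a strong resolving set of $G$ if for any two distinct vertices $p,q$ there is $s\in Q$ such that $p$ lies on some shortest $q$–$s$ path or $q$ lies on some shortest $p$–$s$ path. *)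

From mathcomp Require Import all_boot.
Set Implicit Arguments. Unset Strict Implicit. Unset Printing Implicit Defensive.

Definition is_walk (V : finType) (adj : rel V) (x y : V) (p : seq V) : Prop :=
  path adj x p /\ last x p = y.

Definition is_shortest_path (V : finType) (adj : rel V) (x y : V) (p : seq V) : Prop :=
  is_walk adj x y p /\ forall q : seq V, is_walk adj x y q -> size p <= size q.

Definition on_shortest_path (V : finType) (adj : rel V) (z x y : V) : Prop :=
  exists p : seq V, is_shortest_path adj x y p /\ z \in x :: p.

Definition strong_resolving (V : finType) (adj : rel V) (Q : {set V}) : Prop :=
  forall p q : V, p != q ->
    exists2 s, s \in Q &
      (on_shortest_path adj p q s \/ on_shortest_path adj q p s).

Definition nbhd_set (V : finType) (adj : rel V) (A : {set V}) : {set V} :=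
  [set x | (x \notin A) && [exists y in A, adj y x]].

(* Indices 1..n are represented by 'I_n = {0,...,n-1}.  The vertex v_i v_j of V_2
   is represented by the 2-element set {i,j}.  An edge {v_r, v_i v_j} of H(n)
   (with r in {i,j}) is represented by the pair (r, {i,j}). *)

Definition Lvert_pred (n : nat) (e : 'I_n * {set 'I_n}) : bool :=
  (#|e.2| == 2) && (e.1 \in e.2).

(* vertices of L(n) = edges of H(n) *)
Definition Lvert (n : nat) := {e : 'I_n * {set 'I_n} | Lvert_pred e}.

(* two edges of H(n) are adjacent in L(n) iff distinct and share an endpoint *)
Definition Ladj (n : nat) : rel (Lvert n) :=
  fun a b => (a != b) && (((val a).1 == (val b).1) || ((val a).2 == (val b).2)).

Definition W (n : nat) (r : 'I_n) : {set Lvert n} :=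
  [set a : Lvert n | (val a).1 == r].

Definition NW (n : nat) (r : 'I_n) : {set Lvert n} := nbhd_set (@Ladj n) (W r).

From mathcomp Require Import all_boot.
Set Implicit Arguments. Unset Strict Implicit. Unset Printing Implicit Defensive.

(* Identify the vertex {v_x, v_x v_y} of L(n) with the ordered pair (x, y): then
   (x, y) is adjacent to (x, y') for y' <> y and to (y, x), and N(W_r) consists of
   the pairs (k, r).  For distinct r, a, b, the vertices p = (r, a) and q = (a, b)
   are at distance 2, and for every s = (k, r) a walk of length at most 3 from q
   to s (resp. at most 2 from p to s) is shorter than any walk through p
   (resp. through q).  So no vertex of N(W_r) strongly resolves p and q. *)

Section ShortestPaths.
Variables (V : finType) (adj : rel V).

Definition dist_ge (x y : V) (m : nat) : Prop :=
  forall p, is_walk adj x y p -> m <= size p.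

Lemma dist_ge1 x y : x != y -> dist_ge x y 1.
Proof. by move=> xy [|z p] // [_ /= yx]; rewrite yx eqxx in xy. Qed.

Lemma dist_ge2 x y : x != y -> ~~ adj x y -> dist_ge x y 2.
Proof.
move=> xy nxy [|z [|w p]] // [] /=.
- by move=> _ yx; rewrite yx eqxx in xy.
- by move=> /andP[xz _] zy; rewrite -zy xz in nxy.
Qed.

Lemma is_walk_split x y z p : is_walk adj x y p -> z \in x :: p ->
  exists p1 p2,
    [/\ is_walk adj x z p1, is_walk adj z y p2 & size p = size p1 + size p2].
Proof.
move=> [xp py] zp; case/splitPl: zp xp py => p1 p2 zp1.
rewrite cat_path last_cat -zp1 => /andP[xp1 zp2] zy.
by exists p1, p2; rewrite size_cat.
Qed.

Lemma on_shortest_path_dist z x y m1 m2 q : on_shortest_path adj z x y ->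
  dist_ge x z m1 -> dist_ge z y m2 -> is_walk adj x y q -> m1 + m2 <= size q.
Proof.
move=> [p [[xyp min_p] zp]] xz zy xyq.
have [p1 [p2 [xzp1 zyp2 size_p]]] := is_walk_split xyp zp.
apply: leq_trans (leq_add (xz _ xzp1) (zy _ zyp2)) _.
by rewrite -size_p min_p.
Qed.

End ShortestPaths.

Lemma set2_eqE (T : finType) (k m k' m' : T) : k != m ->
  ([set k; m] == [set k'; m']) = (k == k') && (m == m') || (k == m') && (m == k').
Proof.
move=> km; apply/eqP/idP => [e|/orP[]/andP[/eqP<- /eqP<-] //]; last exact: setUC.
move: (set21 k m) (set22 k m) km; rewrite e !inE.
by case/orP=> /eqP->; case/orP=> /eqP->; rewrite !eqxx ?orbT.
Qed.

Section LineGraph.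
Variable n : nat.

Lemma Lv_subproof (k m : 'I_n) : k != m -> Lvert_pred (k, [set k; m]).
Proof. by move=> km; rewrite /Lvert_pred /= cards2 km set21. Qed.

Definition Lv (k m : 'I_n) (km : k != m) : Lvert n :=
  exist _ (k, [set k; m]) (Lv_subproof km).

Lemma LvP (u : Lvert n) : exists k m (km : k != m), u = Lv km.
Proof.
case: u => [[k S] uP].
have /andP[/cards2P[x [y [xy eS]]] kS] : (#|S| == 2) && (k \in S) := uP.
subst S; case/set2P: kS => ek; subst k.
- by exists x, y, xy; exact: val_inj.
- have yx : y != x by rewrite eq_sym.
  by exists y, x, yx; apply: val_inj; rewrite /= setUC.
Qed.

Lemma Lv_eqE k m k' m' (km : k != m) (km' : k' != m') :
  (Lv km == Lv km') = (k == k') && (m == m').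
Proof.
rewrite -val_eqE /= xpair_eqE set2_eqE //.
by case: eqVneq => [<-|] //=; rewrite [m == k]eq_sym (negbTE km) andbF orbF.
Qed.

Lemma Ladj_Lv k m k' m' (km : k != m) (km' : k' != m') :
  Ladj (Lv km) (Lv km') = (k == k') && (m != m') || (k == m') && (m == k').
Proof.
rewrite /Ladj Lv_eqE /= set2_eqE //.
by case: eqVneq => [<-|] //=; rewrite andbT [m == k]eq_sym (negbTE km) andbF orbF.
Qed.

Lemma mem_NW r k m (km : k != m) : (Lv km \in NW r) = (m == r).
Proof.
rewrite /NW /nbhd_set !inE /=.
apply/andP/eqP => [[kr /existsP[u /andP[]]]|mr].
  have [j [l [jl ->]]] := LvP u; rewrite inE /= => /eqP jr; subst j.
  by rewrite Ladj_Lv eq_sym (negbTE kr) => /andP[/eqP].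
subst m; split=> //; apply/existsP.
have rk : r != k by rewrite eq_sym.
by exists (Lv rk); rewrite inE /= eqxx Ladj_Lv !eqxx orbT.
Qed.

End LineGraph.

Lemma exists_two_others n (r : 'I_n) : 2 < n ->
  exists a b : 'I_n, [/\ r != a, r != b & a != b].
Proof.
move=> n_gt2; have : 1 < #|[set~ r]| by rewrite cardsC1 card_ord ltn_predRL.
case/card_gt1P=> a [b [ar br ab]]; exists a, b.
by split; rewrite // eq_sym -in_setC1.
Qed.

Section NWNotResolving.
Variables (n : nat) (r a b k : 'I_n).
Hypotheses (ra : r != a) (rb : r != b) (ab : a != b) (kr : k != r).

Let ar : a != r. Proof. by rewrite eq_sym. Qed.
Let br : b != r. Proof. by rewrite eq_sym. Qed.
Let ba : b != a. Proof. by rewrite eq_sym. Qed.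
Let rk : r != k. Proof. by rewrite eq_sym. Qed.
Let neqE := (negbTE ra, negbTE ar, negbTE rb, negbTE br,
            negbTE ab, negbTE ba, negbTE kr, negbTE rk).

Lemma ra_not_on_shortest_ab_kr :
  ~ on_shortest_path (@Ladj n) (Lv ra) (Lv ab) (Lv kr).
Proof.
move=> pqs.
have dqp : dist_ge (@Ladj n) (Lv ab) (Lv ra) 2.
  by apply: dist_ge2; rewrite ?Lv_eqE ?Ladj_Lv ?eqxx ?neqE.
have dps : dist_ge (@Ladj n) (Lv ra) (Lv kr) 1.
  by apply: dist_ge1; rewrite Lv_eqE !neqE.
have detour := on_shortest_path_dist pqs dqp.
case: (eqVneq k a) => [ka|ka].
  subst k; have /(detour _ _ dps) : is_walk (@Ladj n) (Lv ab) (Lv kr) [:: Lv kr].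
    by split; rewrite //= Ladj_Lv ?eqxx ?neqE.
  by [].
have ak : a != k by rewrite eq_sym.
have {}dps : dist_ge (@Ladj n) (Lv ra) (Lv kr) 2.
  by apply: dist_ge2; rewrite ?Lv_eqE ?Ladj_Lv ?eqxx ?neqE ?(negbTE ka) ?(negbTE ak).
have {}detour := detour _ _ dps.
case: (eqVneq k b) => [kb|kb].
  subst k; have /detour : is_walk (@Ladj n) (Lv ab) (Lv kr) [:: Lv ba; Lv kr].
    by split; rewrite //= !Ladj_Lv ?eqxx ?neqE.
  by [].
have bk : b != k by rewrite eq_sym.
have /detour : is_walk (@Ladj n) (Lv ab) (Lv kr) [:: Lv ak; Lv ka; Lv kr].
  by split; rewrite //= !Ladj_Lv ?eqxx ?neqE (negbTE ka) (negbTE ak) (negbTE bk).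
by [].
Qed.

Lemma ab_not_on_shortest_ra_kr :
  ~ on_shortest_path (@Ladj n) (Lv ab) (Lv ra) (Lv kr).
Proof.
move=> qps.
have dpq : dist_ge (@Ladj n) (Lv ra) (Lv ab) 2.
  by apply: dist_ge2; rewrite ?Lv_eqE ?Ladj_Lv ?eqxx ?neqE.
have dqs : dist_ge (@Ladj n) (Lv ab) (Lv kr) 1.
  by apply: dist_ge1; rewrite Lv_eqE ?neqE andbF.
have detour := on_shortest_path_dist qps dpq dqs.
case: (eqVneq k a) => [ka|ka].
  subst k; have /detour : is_walk (@Ladj n) (Lv ra) (Lv kr) [:: Lv kr].
    by split; rewrite //= Ladj_Lv ?eqxx ?neqE.
  by [].
have ak : a != k by rewrite eq_sym.
have /detour : is_walk (@Ladj n) (Lv ra) (Lv kr) [:: Lv rk; Lv kr].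
  by split; rewrite //= !Ladj_Lv ?eqxx ?neqE (negbTE ak).
by [].
Qed.

End NWNotResolving.

Theorem proposition3p3 (n : nat) (hn : 5 <= n) (r : 'I_n) :
  ~ strong_resolving (@Ladj n) (NW r).
Proof.
move=> resolving.
have [a [b [ra rb ab]]] := exists_two_others r (leq_trans (isT : 2 < 5) hn).
have pq : Lv ra != Lv ab by rewrite Lv_eqE (negbTE ra).
have [s] := resolving _ _ pq.
have [k [m [km ->]]] := LvP s; rewrite mem_NW => /eqP mr; subst m.
by case; [exact: ra_not_on_shortest_ab_kr | exact: ab_not_on_shortest_ra_kr].
Qed.
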